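(* Let $(\Sigma_P,\theta,\mu)$ be a Markov shift over a finite alphabet $S$, let $n\in\mathbb{N}$ and let $\varphi=\sum_{C\in C_n}k_C\mathbbm{1}_C$ with $k_C\in\mathbb{N}$. Let $\overline{M}$, $G$ and the cofactors $C_{t,r}$ be as defined in the context. Let $(a_1,\dots,a_m)$ be an admissible word with $m\ge n$, let $t$ be the index of the block $[a_1,\dots,a_n]\times[0,1)$ and $r$ the index of the block $[a_{m-n+1},\dots,a_m]\times[0,1)$. Then \[C_{t,r}(1)=\frac{1}{\mu(\varphi)}\,\mu([a_1,\dots,a_n])\,G(1).\]
   Context: A Markov shift: $P=(p_{a,b})_{a,b\in S}$ is a non-negative irreducible row-stochastic matrix, $\Sigma_P=\{x\in S^{\mathbb{N}}:p_{x_i,x_{i+1}}>0\ \forall i\}$, $\theta$ the shift, $\pi$ the unique positive probability vector with $\pi P=\pi$, and $\mu([a_1,\dots,a_n])=\pi_{a_1}\prod_{i=1}^{n-1}p_{a_i,a_{i+1}}$. $C_n$ is the set of (nonempty) $n$-cylinders; $\mu(\varphi)=\int\varphi\,d\mu$. The blocks are $\overline{C}_n=\{C\times[k-1,k):C\in C_n,1\le k\le k_C\}$, enumerated in a fixed order. $\overline{M}$ is the $\overline{C}_n\times\overline{C}_n$ matrix with: for $b=C\times[k-1,k)$ with $k<k_C$, $\overline{M}_{b,b'}=1$ if $b'=C\times[k,k+1)$ and $0$ otherwise; for $b=[a_1,\dots,a_n]\times[k_C-1,k_C)$ with $C=[a_1,\dots,a_n]$, $\overline{M}_{b,b'}=p_{a_n,a}$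 if $b'=[a_2,\dots,a_n,a]\times[0,1)$ for some $a\in S$ and $0$ otherwise. (This is the matrix of the transfer operator of the time-one map of the special flow under $\varphi$ on functions constant on blocks, w.r.t. the basis $\mathbbm{1}_b/\overline{\mu}(b)$.) $G$ is the polynomial with $\det(\mathrm{id}-z\overline{M})=(1-z)G(z)$, and $C_{t,r}(z)=(-1)^{t+r}\det[\mathrm{id}-z\overline{M}]_{t,r}$ is the cofactor (determinant of $\mathrm{id}-z\overline{M}$ with row $t$ and column $r$ removed). *)

From HB Require Import structures.
From mathcomp Require Import all_boot all_order all_algebra.
From mathcomp Require Import reals.

Set Implicit Arguments.
Unset Strict Implicit.
Unset Printing Implicit Defensive.

Import Order.TTheory GRing.Theory Num.Theory.
Local Open Scope ring_scope.

(* Markov shift over the finite (nonempty) alphabet S = 'I_s.+1 = {0,...,s}. *)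
Section MarkovBlocks.
Variable R : realType.
Variable s : nat.
Variable P : 'M[R]_s.+1.

Definition stochastic : Prop :=
  (forall i j, 0 <= P i j) /\ (forall i, \sum_j P i j = 1).

Definition irreducible : Prop :=
  forall i j, exists m : nat, 0 < (P ^+ m) i j.

Definition stationary (pi : 'rV[R]_s.+1) : Prop :=
  [/\ forall i, 0 < pi 0 i, \sum_i pi 0 i = 1 & pi *m P = pi].

(* admissible word: p_{w_i, w_{i+1}} > 0 for consecutive letters;
   the cylinder [w] is nonempty iff w is admissible *)
Definition admissible (w : seq 'I_s.+1) : bool :=
  sorted (fun a b => 0 < P a b) w.

(* mu([a_1,...,a_m]) = pi_{a_1} prod_{i=1}^{m-1} p_{a_i,a_{i+1}}  (for m >= 1) *)
Definition mu (pi : 'rV[R]_s.+1) (w : seq 'I_s.+1) : R :=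
  pi 0 (head ord0 w) *
  \prod_(i < (size w).-1) P (nth ord0 w i) (nth ord0 w i.+1).

Variable n : nat.
(* k C = k_C, the value of phi on the n-cylinder C (only relevant on
   admissible words, i.e. on nonempty cylinders) *)
Variable k : n.-tuple 'I_s.+1 -> nat.

Definition kmax : nat := \max_(C : n.-tuple 'I_s.+1) k C.

(* a block C x [j, j+1) with C a nonempty n-cylinder and 0 <= j < k_C
   (j = k-1 in the paper's notation C x [k-1,k), 1 <= k <= k_C) *)
Definition is_block (x : n.-tuple 'I_s.+1 * 'I_kmax) : bool :=
  admissible x.1 && (x.2 < k x.1)%N.

Definition block := {x : n.-tuple 'I_s.+1 * 'I_kmax | is_block x}.

Definition nblocks : nat := #|{: block}|.

Definition blk (i : 'I_nblocks) : n.-tuple 'I_s.+1 * 'I_kmax :=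
  val (enum_val i).

Definition Mbar_entry (b b' : n.-tuple 'I_s.+1 * 'I_kmax) : R :=
  let: (C, j) := b in
  let: (C', j') := b' in
  if (j.+1 < k C)%N then ((C' == C) && (j' == j.+1 :> nat))%:R
  else if (j' == 0%N :> nat) && (take n.-1 C' == behead C)
       then P (last ord0 C) (last ord0 C')
       else 0.

Definition Mbar : 'M[R]_nblocks := \matrix_(i, j) Mbar_entry (blk i) (blk j).

Definition mu_phi (pi : 'rV[R]_s.+1) : R :=
  \sum_(C : n.-tuple 'I_s.+1 | admissible C) (k C)%:R * mu pi C.

Definition IzM : 'M[{poly R}]_nblocks := 1%:M - 'X *: map_mx polyC Mbar.

End MarkovBlocks.

From HB Require Import structures.
From mathcomp Require Import all_boot all_order all_algebra.
From mathcomp Require Import reals.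
From mathcomp Require Import zify.
Set Implicit Arguments.
Unset Strict Implicit.
Unset Printing Implicit Defensive.

Import Order.TTheory GRing.Theory Num.Theory.
Local Open Scope ring_scope.

(* The block matrix Mbar is stochastic, and the row vector nu of the masses
   mu(C) of the blocks C x [j, j+1) is Mbar-invariant with total mass mu(phi).
   Since (I - z Mbar) 1 = (1 - z) 1, the identity
   adj(I - z Mbar) (I - z Mbar) = (1 - z) G I gives adj(I - z Mbar) 1 = G 1,
   hence adj(I - Mbar) 1 = G(1) 1.  Every row of adj(I - Mbar) lies in the left
   kernel of the singular matrix I - Mbar, which is the line spanned by nu
   unless the adjugate vanishes; so row r is c nu for some c.  Summing it gives
   G(1) = c mu(phi), while C_{t,r}(1) is its t-th entry c nu_t. *)

Lemma cofactor_eq0_rank (F : fieldType) m (A : 'M[F]_m) i j :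
  (\rank A < m.-1)%N -> cofactor A i j = 0.
Proof.
move=> rkA; rewrite /cofactor.
have minorE : row' i (col' j A) = rowsub (lift i) 1%:M *m A *m colsub (lift j) 1%:M.
  by rewrite -rowsubE mulmx_colsub mulmx1; apply/matrixP => x y; rewrite !mxE.
suff : row' i (col' j A) \notin unitmx.
  by rewrite unitmxE unitfE negbK => /eqP ->; rewrite mulr0.
apply: contraL rkA => /mxrank_unit rk_minor; rewrite -leqNgt -{1}rk_minor minorE.
exact: leq_trans (mxrankM_maxl _ _) (mxrankM_maxr _ _).
Qed.

(* The rows of adj A lie in the left kernel of A, which is the line spanned
   by v unless rank A < m - 1, in which case adj A = 0. *)
Lemma row_adj_scale (F : fieldType) m (A : 'M[F]_m) (v : 'rV_m) i :
  \det A = 0 -> v *m A = 0 -> v != 0 -> exists c, row i (\adj A) = c *: v.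
Proof.
move=> detA0 vA0 v_neq0.
have [rkA|rkA] := ltnP (\rank A) m.-1.
  by exists 0; rewrite scale0r; apply/rowP => j; rewrite !mxE cofactor_eq0_rank.
have v_ker : (v <= kermx A)%MS by apply/sub_kermxP.
have row_ker : (row i (\adj A) <= kermx A)%MS.
  by apply/sub_kermxP; rewrite -row_mul mul_adj_mx detA0 raddf0 row0.
have ker_v : (kermx A <= v)%MS.
  have [_ eq_v_ker] := mxrank_leqif_eq v_ker.
  suff : \rank v == \rank (kermx A) by rewrite eq_v_ker => /andP [].
  by rewrite eqn_leq mxrankS //= rank_rV v_neq0 mxrank_ker; lia.
have /submxP [D ->] := submx_trans row_ker ker_v.
by exists (D 0 0); rewrite {1}[D]mx11_scalar mul_scalar_mx.
Qed.

Section ResolventAtOne.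
Variables (F : fieldType) (m : nat) (M : 'M[F]_m) (G : {poly F}).
Local Notation IzM := (1%:M - 'X *: map_mx polyC M).
Local Notation ones := (const_mx 1 : 'cV_m).
Hypothesis M_ones : M *m ones = ones.
Hypothesis det_IzM : \det IzM = (1 - 'X) * G.

Lemma horner1_IzM : map_mx (horner_eval 1) IzM = 1%:M - M.
Proof.
apply/matrixP => i j; rewrite !mxE horner_evalE hornerD hornerN hornerM hornerX.
by rewrite hornerC mul1r; case: (i == j); rewrite /= ?hornerC.
Qed.

Lemma adj_IzM_ones : \adj IzM *m ones = G *: ones.
Proof.
have IzM_ones : IzM *m ones = (1 - 'X) *: ones.
  rewrite mulmxBl mul1mx -scalemxAl -(map_const_mx polyC) -map_mxM M_ones.
  by rewrite map_const_mx scalerBl scale1r.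
have X1_neq0 : (1 - 'X : {poly F}) != 0.
  by rewrite -oppr_eq0 opprB -polyC1 polyXsubC_eq0.
have : (1 - 'X) *: (\adj IzM *m ones) = (1 - 'X) *: (G *: ones).
  by rewrite scalemxAr -IzM_ones mulmxA mul_adj_mx mul_scalar_mx det_IzM scalerA.
move/matrixP => eq_scaled; apply/matrixP => i j.
by apply: (mulfI X1_neq0); have := eq_scaled i j; rewrite !mxE.
Qed.

Lemma adj_at1_ones : \adj (1%:M - M) *m ones = G.[1] *: ones.
Proof.
have := congr1 (map_mx (horner_eval 1)) adj_IzM_ones.
rewrite map_mxM map_mx_adj horner1_IzM map_const_mx [X in const_mx X]rmorph1 => ->.
by apply/matrixP => i j; rewrite !mxE rmorphM rmorph1 mulr1 /= horner_evalE.
Qed.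

Lemma det_at1 : \det (1%:M - M) = 0.
Proof.
by rewrite -horner1_IzM det_map_mx det_IzM rmorphM /= horner_evalE !hornerE subrr mul0r.
Qed.

Lemma cofactor_IzM_at1 (nu : 'rV[F]_m) i j : nu *m M = nu -> nu != 0 ->
  (cofactor IzM i j).[1] * \sum_l nu 0 l = nu 0 i * G.[1].
Proof.
move=> nuM nu_neq0.
have nu_ker : nu *m (1%:M - M) = 0 by rewrite mulmxBr mulmx1 nuM subrr.
have [c adj_row] := row_adj_scale j det_at1 nu_ker nu_neq0.
have cofactor_at1 l : cofactor (1%:M - M) l j = c * nu 0 l.
  by have := congr1 (fun v : 'rV_m => v 0 l) adj_row; rewrite !mxE.
have G1 : G.[1] = c * \sum_l nu 0 l.
  have := congr1 (fun u : 'cV_m => u j 0) adj_at1_ones; rewrite !mxE mulr1 => <-.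
  by rewrite mulr_sumr; apply: eq_bigr => l _; rewrite !mxE mulr1 cofactor_at1.
by rewrite -horner_evalE -cofactor_map_mx horner1_IzM cofactor_at1 G1 mulrCA mulrA.
Qed.

End ResolventAtOne.

Lemma sorted_rcons_behead (T : Type) (e : rel T) x (w : seq T) a :
  sorted e w -> e (last x w) a -> sorted e (rcons (behead w) a).
Proof.
case: w => [|c0 [|c1 cs]] //= /andP [_ sorted_w] e_last.
by rewrite rcons_path sorted_w.
Qed.

Section MarkovBlocks.
Variables (R : realType) (s : nat) (P : 'M[R]_s.+1) (n : nat).
Variable k : n.-tuple 'I_s.+1 -> nat.

Local Notation T := (n.-tuple 'I_s.+1).
Local Notation X := (T * 'I_(kmax k))%type.

Fixpoint path_prob (x : 'I_s.+1) (w : seq 'I_s.+1) : R :=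
  if w is y :: w' then P x y * path_prob y w' else 1.

Lemma mu_cons pi x w : mu P pi (x :: w) = pi 0 x * path_prob x w.
Proof.
rewrite /mu /=; congr (_ * _).
elim: w x => [|y w IH] x /=; first by rewrite big_ord0.
by rewrite big_ord_recl /= IH.
Qed.

Lemma path_prob_rcons x w c :
  path_prob x (rcons w c) = path_prob x w * P (last x w) c.
Proof.
elim: w x => [|y w IH] x /=; first by rewrite mulr1 mul1r.
by rewrite IH mulrA.
Qed.

Lemma path_prob_gt0 x w : path (fun a b => 0 < P a b) x w -> 0 < path_prob x w.
Proof. by elim: w x => [|y w IH] x //= /andP [Pxy /IH]; apply: mulr_gt0. Qed.

Lemma k_le_kmax (C : T) : (k C <= kmax k)%N.
Proof. exact: leq_bigmax. Qed.

Lemma pred_k_lt_kmax (j : 'I_(kmax k)) (C : T) : ((k C).-1 < kmax k)%N.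
Proof. by have := k_le_kmax C; have := ltn_ord j; lia. Qed.

Lemma blkP (i : 'I_(nblocks P k)) : is_block P (blk i).
Proof. exact: valP (enum_val i). Qed.

Lemma sum_blocks (F : X -> R) :
  \sum_(i < nblocks P k) F (blk i) = \sum_(x : X | is_block P x) F x.
Proof.
rewrite /blk -(big_enum_val (A := predT) (fun b : block P k => F (val b))).
by rewrite (big_sub (@is_block _ _ P n k)).
Qed.

Lemma sum_mu_blocks pi : \sum_(x : X | is_block P x) mu P pi x.1 = mu_phi P k pi.
Proof.
rewrite /mu_phi -(pair_big_dep (fun C : T => admissible P C)
  (fun C (j : 'I_(kmax k)) => (j < k C)%N) (fun C _ => mu P pi C)) /=.
apply: eq_bigr => C _.
by rewrite (big_ord_narrow (k_le_kmax C)) sumr_const card_ord mulr_natl.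
Qed.

Hypothesis n_gt0 : (0 < n)%N.

Lemma cyl_head_behead (C : T) : head ord0 C :: behead C = C.
Proof. by case: C => -[|c cs] //= /eqP n0; move: n_gt0; rewrite -n0. Qed.

Lemma rcons_take_last (C : T) : rcons (take n.-1 C) (last ord0 C) = C.
Proof.
case: C => w /= /eqP; case/lastP: w => [|w c].
  by move=> n0; move: n_gt0; rewrite -n0.
rewrite size_rcons => <- /=.
by rewrite last_rcons -[rcons w c]cats1 take_size_cat // cats1.
Qed.

Lemma size_cyl_next (C : T) a : size (rcons (behead C) a) == n.
Proof. by rewrite size_rcons size_behead size_tuple prednK. Qed.

Definition cyl_next (C : T) a : T := Tuple (size_cyl_next C a).
Arguments cyl_next : simpl never.

Lemma size_cyl_prev a (C : T) : size (a :: take n.-1 C) == n.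
Proof. by rewrite /= size_takel ?size_tuple ?leq_pred // prednK. Qed.

Definition cyl_prev a (C : T) : T := Tuple (size_cyl_prev a C).
Arguments cyl_prev : simpl never.

Lemma take_cyl_next (C : T) a : take n.-1 (cyl_next C a) = behead C.
Proof. by rewrite /= -cats1 take_size_cat // size_behead size_tuple. Qed.

Lemma last_cyl_next (C : T) a : last ord0 (cyl_next C a) = a.
Proof. exact: last_rcons. Qed.

Lemma cyl_nextK (C C' : T) :
  take n.-1 C' = behead C -> cyl_next C (last ord0 C') = C'.
Proof. by move=> takeC'; apply: val_inj; rewrite /= -takeC' rcons_take_last. Qed.

Lemma cyl_prevK (C C' : T) :
  take n.-1 C' = behead C -> cyl_prev (head ord0 C) C' = C.
Proof. by move=> takeC'; apply: val_inj; rewrite /= takeC' cyl_head_behead. Qed.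

Lemma admissible_cyl_next (C : T) a :
  admissible P C -> 0 < P (last ord0 C) a -> admissible P (cyl_next C a).
Proof. exact: sorted_rcons_behead. Qed.

Lemma admissible_cyl_prev a (C : T) :
  admissible P C -> 0 < P a (head ord0 C) -> admissible P (cyl_prev a C).
Proof.
move=> admC Pa; apply: take_path.
by rewrite -cyl_head_behead /= Pa; rewrite /admissible -cyl_head_behead in admC.
Qed.

Lemma mu_cyl_prev pi a (C : T) :
  mu P pi (cyl_prev a C) * P (last ord0 (cyl_prev a C)) (last ord0 C) =
  pi 0 a * (P a (head ord0 C) * path_prob (head ord0 C) (behead C)).
Proof.
rewrite mu_cons /= -mulrA -path_prob_rcons rcons_take_last.
by rewrite -[in LHS]cyl_head_behead.
Qed.

Hypothesis P_ge0 : forall i j, 0 <= P i j.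
Hypothesis P_rows : forall i, \sum_j P i j = 1.
Hypothesis k_gt0 : forall C : T, admissible P C -> (0 < k C)%N.

Lemma Mbar_row_sum_inner (C : T) (j : 'I_(kmax k)) :
  admissible P C -> (j.+1 < k C)%N ->
  \sum_(x : X | is_block P x) Mbar_entry P (C, j) x = 1.
Proof.
move=> admC lt_jk.
have lt_jkmax : (j.+1 < kmax k)%N := leq_trans lt_jk (k_le_kmax C).
rewrite (bigD1 (C, Ordinal lt_jkmax)) /=; last by rewrite /is_block /= admC lt_jk.
rewrite /Mbar_entry lt_jk !eqxx /= big1 ?addr0 // => -[C' j'] /andP [_ ne].
case: (eqVneq C' C) => [eC|] //=; case: (eqVneq (val j') j.+1) => [ej|] //=.
have eJ : j' = Ordinal lt_jkmax by apply: val_inj.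
by rewrite eC eJ eqxx in ne.
Qed.

Lemma Mbar_row_sum_last (C : T) (j : 'I_(kmax k)) :
  admissible P C -> ~~ (j.+1 < k C)%N ->
  \sum_(x : X | is_block P x) Mbar_entry P (C, j) x = 1.
Proof.
move=> admC /negbTE not_lt.
pose j0 : 'I_(kmax k) := Ordinal (leq_ltn_trans (leq0n j) (ltn_ord j)).
rewrite (eq_bigr (fun x : X =>
  if (x.2 == 0%N :> nat) && (take n.-1 x.1 == behead C)
  then P (last ord0 C) (last ord0 x.1) else 0)); last first.
  by case=> C' j' _; rewrite /Mbar_entry not_lt.
rewrite -big_mkcondr (reindex_onto (fun a => (cyl_next C a, j0))
  (fun x : X => last ord0 x.1)) /=; last first.
  move=> [C' j'] /andP [_ /andP [/eqP j'0 /eqP takeC']] /=.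
  by congr pair; [exact: cyl_nextK | exact: val_inj].
under eq_bigr do rewrite last_cyl_next.
rewrite -(P_rows (last ord0 C)) big_rmcond // => a; apply: contraNeq => Pa_neq0.
have Pa_gt0 : 0 < P (last ord0 C) a by rewrite lt_def Pa_neq0 P_ge0.
have adm : admissible P (cyl_next C a) by exact: admissible_cyl_next.
by rewrite /is_block adm k_gt0 // take_cyl_next last_cyl_next !eqxx.
Qed.

Lemma Mbar_row_sum (b : X) : is_block P b ->
  \sum_(x : X | is_block P x) Mbar_entry P b x = 1.
Proof.
case: b => C j /andP [admC _].
case: (ltnP j.+1 (k C)) => [lt_jk|ge_jk]; first exact: Mbar_row_sum_inner.
by apply: Mbar_row_sum_last; rewrite // -leqNgt.
Qed.

Variable pi : 'rV[R]_s.+1.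
Hypothesis pi_invariant : pi *m P = pi.

Lemma Mbar_col_sum_inner (C' : T) (j' : 'I_(kmax k)) :
  admissible P C' -> (j' < k C')%N -> (0 < j')%N ->
  \sum_(x : X | is_block P x) mu P pi x.1 * Mbar_entry P x (C', j') = mu P pi C'.
Proof.
move=> admC' lt_jk j'_gt0.
have lt_pred : (j'.-1 < kmax k)%N := leq_ltn_trans (leq_pred j') (ltn_ord j').
rewrite (bigD1 (C', Ordinal lt_pred)) /=; last first.
  by rewrite /is_block /= admC' (leq_ltn_trans (leq_pred _) lt_jk).
rewrite /Mbar_entry prednK // lt_jk !eqxx mulr1 big1 ?addr0 //.
move=> -[C j] /andP [_ ne] /=.
case: ifP => _; last by rewrite eqn0Ngt j'_gt0 /= mulr0.
case: (eqVneq C' C) => [eC|] /=; last by rewrite mulr0.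
case: (eqVneq (val j') j.+1) => [ej|] /=; last by rewrite mulr0.
have eJ : j = Ordinal lt_pred by apply: val_inj; rewrite /= ej.
by rewrite eC eJ eqxx in ne.
Qed.

Lemma Mbar_col_sum_last (C' : T) (j' : 'I_(kmax k)) :
  admissible P C' -> val j' = 0%N ->
  \sum_(x : X | is_block P x) mu P pi x.1 * Mbar_entry P x (C', j') = mu P pi C'.
Proof.
move=> admC' j'0.
rewrite (eq_bigr (fun x : X =>
  if (~~ (x.2.+1 < k x.1)%N) && (take n.-1 C' == behead x.1)
  then mu P pi x.1 * P (last ord0 x.1) (last ord0 C') else 0)); last first.
  case=> C j _; rewrite /Mbar_entry j'0 /=.
  by case: ifP => _ /=; [rewrite andbF mulr0 | case: ifP => _; rewrite ?mulr0].
pose top (C : T) : 'I_(kmax k) := Ordinal (pred_k_lt_kmax j' C).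
rewrite -big_mkcondr (reindex_onto (fun a => (cyl_prev a C', top (cyl_prev a C')))
  (fun x : X => head ord0 x.1)) /=; last first.
  move=> [C j] /andP [/andP [_ lt_jk] /andP [not_lt /eqP takeC']] /=.
  rewrite cyl_prevK //; congr pair; apply: val_inj => /=.
  by move: lt_jk not_lt; rewrite /= -leqNgt; lia.
have pi_head : \sum_a pi 0 a * P a (head ord0 C') = pi 0 (head ord0 C').
  have := congr1 (fun v : 'rV_s.+1 => v 0 (head ord0 C')) pi_invariant.
  by rewrite !mxE.
under eq_bigr do rewrite mu_cyl_prev mulrA.
rewrite -[in RHS]cyl_head_behead mu_cons -pi_head mulr_suml big_rmcond // => a.
apply: contraNeq; rewrite !mulf_eq0 !negb_or => /andP [/andP [_ Pa_neq0] _].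
have Pa_gt0 : 0 < P a (head ord0 C') by rewrite lt_def Pa_neq0 P_ge0.
have adm : admissible P (cyl_prev a C') by exact: admissible_cyl_prev.
by rewrite /is_block adm /= prednK ?k_gt0 // leqnn ltnn !eqxx.
Qed.

Lemma Mbar_col_sum (b' : X) : is_block P b' ->
  \sum_(x : X | is_block P x) mu P pi x.1 * Mbar_entry P x b' = mu P pi b'.1.
Proof.
case: b' => C' j' /andP [admC' lt_jk] /=.
case: (posnP j') => [j'0|j'_gt0]; first exact: Mbar_col_sum_last.
exact: Mbar_col_sum_inner.
Qed.

Hypothesis pi_gt0 : forall i, 0 < pi 0 i.

Lemma mu_gt0 w : admissible P w -> 0 < mu P pi w.
Proof.
case: w => [|x w]; first by rewrite /mu big_ord0 mulr1.
by rewrite mu_cons => adm; rewrite mulr_gt0 ?path_prob_gt0.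
Qed.

Definition block_mass : 'rV[R]_(nblocks P k) := \row_i mu P pi (blk i).1.

Lemma Mbar_ones : Mbar P k *m const_mx 1 = const_mx 1 :> 'cV_(nblocks P k).
Proof.
apply/matrixP => i j; rewrite !mxE; under eq_bigr do rewrite !mxE mulr1.
by rewrite (sum_blocks (Mbar_entry P (blk i))) Mbar_row_sum ?blkP.
Qed.

Lemma block_mass_invariant : block_mass *m Mbar P k = block_mass.
Proof.
apply/matrixP => i j; rewrite !mxE; under eq_bigr do rewrite !mxE.
rewrite (sum_blocks (fun x => mu P pi x.1 * Mbar_entry P x (blk j))).
by rewrite Mbar_col_sum ?blkP.
Qed.

Lemma sum_block_mass : \sum_i block_mass 0 i = mu_phi P k pi.
Proof.
under eq_bigr do rewrite mxE.
by rewrite (sum_blocks (fun x => mu P pi x.1)) sum_mu_blocks.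
Qed.

Lemma block_mass_gt0 i : 0 < block_mass 0 i.
Proof. by rewrite mxE mu_gt0 //; case/andP: (blkP i). Qed.

Lemma mu_phi_gt0 (i : 'I_(nblocks P k)) : 0 < mu_phi P k pi.
Proof.
rewrite -sum_block_mass (bigD1 i) //= ltr_wpDr ?block_mass_gt0 //.
by apply: sumr_ge0 => l _; exact/ltW/block_mass_gt0.
Qed.

End MarkovBlocks.

Theorem lemma7p3 (R : realType) (s : nat) (P : 'M[R]_s.+1) (pi : 'rV[R]_s.+1)
  (n : nat) (k : n.-tuple 'I_s.+1 -> nat) (a : seq 'I_s.+1)
  (t r : 'I_(nblocks P k)) (G : {poly R}) :
  stochastic P -> irreducible P -> stationary P pi ->
  (0 < n)%N ->
  (forall C : n.-tuple 'I_s.+1, admissible P C -> (0 < k C)%N) ->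
  admissible P a -> (n <= size a)%N ->
  (blk t).1 = take n a :> seq 'I_s.+1 -> (blk t).2 = 0%N :> nat ->
  (blk r).1 = drop (size a - n) a :> seq 'I_s.+1 -> (blk r).2 = 0%N :> nat ->
  \det (IzM P k) = (1 - 'X) * G ->
  (cofactor (IzM P k) t r).[1] = (mu_phi P k pi)^-1 * mu P pi (take n a) * G.[1].
Proof.
(* Only the first block t of the word matters. *)
move=> [P_ge0 P_rows] _ [pi_gt0 _ pi_inv] n_gt0 k_gt0 _ _ <- _ _ _ det_IzM.
have Mbar1 := Mbar_ones n_gt0 P_ge0 P_rows k_gt0.
have mass_inv := block_mass_invariant n_gt0 P_ge0 k_gt0 pi_inv.
have mass_neq0 : block_mass P k pi != 0.
  by apply: contraTneq (block_mass_gt0 pi_gt0 t) => ->; rewrite mxE ltxx.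
have := cofactor_IzM_at1 Mbar1 det_IzM t r mass_inv mass_neq0.
rewrite sum_block_mass mxE => cof_eq.
have phi_gt0 := mu_phi_gt0 pi_gt0 t.
by rewrite -mulrA -cof_eq mulrCA mulVf ?mulr1 // gt_eqF.
Qed.
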